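(* Consider the market and VCG mechanism described in the context, with the aggregate-dependence assumption. Fix a bidder $l\in L$ with true cost $c_l:\mathcal X_l\to\mathbb{R}_+$, and arbitrary fixed bids $\mathcal{C}_{-l}=\{c_j\}_{j\in L\setminus\{l\}}$ of the other bidders (not necessarily truthful); let $\mathcal{C}=(\mathcal{C}_{-l},c_l)$. Suppose bidder $l$ instead participates under a finite set $S$ of identities (disjoint from $L$) with bids $\mathcal{B}_S=\{b_k\}_{k\in S}$, $b_k:\hat{\mathcal X}_k\to\mathbb{R}_+$, $0\in\hat{\mathcal X}_k$, $b_k(0)=0$, where $\sum_{k\in S}\hat{\mathcal X}_k\subseteq\mathcal X_l$ (Minkowski sum). Let $\mathcal{B}=(\mathcal{C}_{-l},\mathcal{B}_S)$ be the resulting profile on the bidder set $L'=(L\setminus\{l\})\cup S$, and let $\gamma>0$ be a weak-supermodularity constant of the market objective on $L'$. Then bidder $l$'s total utility from shill bidding, $$U_{\mathrm{shill}}=\sum_{k\in S}p_k(\mathcal{B})-c_l\Big(\sum_{k\in S}x^*_k(\mathcal{B})\Big),$$ satisfies $$U_{\mathrm{shill}}\le u_l(\mathcal{C})+\big[\gamma^{-1}-1\big]\big[J(\mathcal{C}_{-l})-J(\mathcal{C}_{-l},\mathcal{B}_S)\big]\le u_l(\mathcal{C})+\big[\gamma^{-1}-1\big]\big[J(\mathcal{C}_{-l})-J(\mathcal{C}_{-l},\mathcal{B}^0_l)\big],$$ where $u_l(\mathcal{C})$ is bidder $l$'s VCG utility when bidding the single truthful bid $c_l$, $J(\mathcal{C}_{-l})$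 is the objective with bidder $l$ removed, and $\mathcal{B}^0_l$ is the single bid $b_l(x_l)=0$ for all $x_l\in\mathcal X_l$.
   Context: Market model. For a finite bidder set $N$ and $t\ge1$ types of supply, bidder $j\in N$ submits a bid function $b_j:\hat{\mathcal X}_j\to\mathbb{R}_+$ with $0\in\hat{\mathcal X}_j\subseteq\mathbb{R}^t_+$, $b_j(0)=0$; a bid profile is $\mathcal{B}=\{b_j\}_{j\in N}$. Aggregate-dependence assumption (same supply types from different bidders are perfect substitutes): there are fixed functions $\bar d:\mathbb{R}^t_+\times\mathbb{R}^p\to\mathbb{R}$ and $\bar g:\mathbb{R}^t_+\times\mathbb{R}^p\to\mathbb{R}^q$, and for any bidder set the cost term and constraints are $d(x,y)=\bar d(\sum_j x_j,y)$, $g(x,y)=\bar g(\sum_j x_j,y)$. For $S\subseteq N$, $$J(\mathcal{B}_S)=\min\Big\{\sum_{j\in S}b_j(x_j)+d(x,y):\ x\in\textstyle\prod_{j\in N}\hat{\mathcal X}_j,\ y\in\mathbb{R}^p,\ g(x,y)\le0,\ x_j=0\ \forall j\notin S\Big\},$$ with value $+\infty$ if infeasible (minima assumed attained when finite). Write $J(\mathcal{B})=J(\mathcal{B}_N)$ and $J(\mathcal{B}_{-K})=J(\mathcal{B}_{N\setminus K})$. $(x^*(\mathcal{B}),y^*(\mathcal{B}))$ denotes the minimizer for $S=N$ chosen by a fixed tie-breaking rule. Standing assumption: for every profile considered, $J(\mathcal{B})<\infty$ and $J(\mathcal{B}_{-j})<\infty$ for every bidder $j$. VCG mechanism (Clarke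 pivot): $p_j(\mathcal{B})=b_j(x^*_j(\mathcal{B}))+J(\mathcal{B}_{-j})-J(\mathcal{B})$; the utility of a bidder $j$ with true cost $c_j$ is $u_j(\mathcal{B})=p_j(\mathcal{B})-c_j(x^*_j(\mathcal{B}))$. Weak-supermodularity constant on bidder set $N$: $\gamma>0$ such that for every bid profile $\mathcal{B}$ on $N$ and all $K,S\subseteq N$ with $J(\mathcal{B}_{S\setminus K})<\infty$, $$\gamma\sum_{j\in K}\big[J(\mathcal{B}_{S\setminus\{j\}})-J(\mathcal{B}_S)\big]\le J(\mathcal{B}_{S\setminus K})-J(\mathcal{B}_S).$$ (The largest such $\gamma$ is the supermodularity ratio $\gamma_{\sup}$; the objective is weakly supermodular if $\gamma_{\sup}>0$.) *)

From Stdlib Require Import Reals Lra List ClassicalEpsilon.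
From Stdlib Require Vectors.Fin.
Import ListNotations.
Open Scope R_scope.

Definition vec (n : nat) := Fin.t n -> R.
Definition vzero {n} : vec n := fun _ => 0.
Definition vadd {n} (u v : vec n) : vec n := fun i => u i + v i.
Definition vnonneg {n} (u : vec n) : Prop := forall i, 0 <= u i.

(* Bidders are identified by natural numbers; bidder sets are duplicate-free lists. *)
Definition mem (j : nat) (K : list nat) : bool := existsb (Nat.eqb j) K.
Definition ldiff (S K : list nat) : list nat := filter (fun j => negb (mem j K)) S.

Record Bid (t : nat) := mkBid { bdom : vec t -> Prop ; bval : vec t -> R }.
Arguments mkBid {t}. Arguments bdom {t}. Arguments bval {t}.

Definition ValidBid {t} (b : Bid t) : Prop :=
  bdom b vzero /\ bval b vzero = 0 /\
  (forall x, bdom b x -> vnonneg x /\ 0 <= bval b x).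

(* A bid profile assigns a bid to every identity (only those in the bidder set matter). *)
Definition Profile (t : nat) := nat -> Bid t.
Definition ValidProfile {t} (B : Profile t) (N : list nat) : Prop :=
  forall j, In j N -> ValidBid (B j).

(* Market: aggregate-dependent cost term dbar and constraints gbar. *)
Record Market (t p q : nat) := mkMarket
  { dbar : vec t -> vec p -> R ; gbar : vec t -> vec p -> vec q }.
Arguments dbar {t p q}. Arguments gbar {t p q}.

Definition vsum {t} (S : list nat) (x : nat -> vec t) : vec t :=
  fold_right (fun j acc => vadd (x j) acc) vzero S.

(* Feasibility for active bidder set S (x_j = 0 for inactive j is implicit:
   inactive bidders contribute neither to the aggregate nor to the bid sum). *)
Definition Feasible {t p q} (M : Market t p q) (B : Profile t) (S : list nat)
  (x : nat -> vec t) (y : vec p) : Prop :=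
  (forall j, In j S -> bdom (B j) (x j)) /\
  (forall i, gbar M (vsum S x) y i <= 0).

Definition Obj {t p q} (M : Market t p q) (B : Profile t) (S : list nat)
  (x : nat -> vec t) (y : vec p) : R :=
  fold_right (fun j acc => bval (B j) (x j) + acc) 0 S + dbar M (vsum S x) y.

Definition IsMin {t p q} (M : Market t p q) (B : Profile t) (S : list nat) (v : R) : Prop :=
  (exists x y, Feasible M B S x y /\ Obj M B S x y = v) /\
  (forall x y, Feasible M B S x y -> v <= Obj M B S x y).

Definition Jfin {t p q} (M : Market t p q) (B : Profile t) (S : list nat) : Prop :=
  exists v, IsMin M B S v.

(* J(B_S): the minimum value when it exists (arbitrary otherwise; only used when Jfin). *)
Definition J {t p q} (M : Market t p q) (B : Profile t) (S : list nat) : R :=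
  epsilon (inhabits 0) (fun v => IsMin M B S v).

Definition IsMinimizer {t p q} (M : Market t p q) (B : Profile t) (N : list nat)
  (x : nat -> vec t) (y : vec p) : Prop :=
  Feasible M B N x y /\ Obj M B N x y = J M B N /\
  (forall x' y', Feasible M B N x' y' -> Obj M B N x y <= Obj M B N x' y').

Definition vcg_pay {t p q} (M : Market t p q) (B : Profile t) (N : list nat)
  (x : nat -> vec t) (j : nat) : R :=
  bval (B j) (x j) + J M B (ldiff N [j]) - J M B N.

Definition sumR (K : list nat) (f : nat -> R) : R :=
  fold_right (fun j acc => f j + acc) 0 K.

Definition WeakSupermodConst {t p q} (M : Market t p q) (N : list nat) (gamma : R) : Prop :=
  0 < gamma /\
  forall (B : Profile t), ValidProfile B N ->
  forall K S : list nat, NoDup K -> NoDup S -> incl K N -> incl S N ->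
    Jfin M B (ldiff S K) -> Jfin M B S ->
    (forall j, In j K -> Jfin M B (ldiff S [j])) ->
    gamma * sumR K (fun j => J M B (ldiff S [j]) - J M B S)
      <= J M B (ldiff S K) - J M B S.

Definition override {t} (S : list nat) (bS C : Profile t) : Profile t :=
  fun j => if mem j S then bS j else C j.

Definition zero_bid_at {t} (l : nat) (C : Profile t) : Profile t :=
  fun j => if Nat.eqb j l then mkBid (bdom (C l)) (fun _ => 0) else C j.

Definition Standing {t p q} (M : Market t p q) (B : Profile t) (N : list nat) : Prop :=
  Jfin M B N /\ forall j, In j N -> Jfin M B (ldiff N [j]).

From Stdlib Require Import Reals Lra List ClassicalEpsilon FunctionalExtensionality.
Import ListNotations.
Open Scope R_scope.

(* Write Delta = J(C_{-l}) - J(C_{-l}, B_S). The identities' VCG payments add up to their bids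
   plus the sum over k in S of J(B_{-k}) - J(B); since removing all of S leaves exactly
   the problem J(C_{-l}), weak supermodularity with K = S bounds this sum by Delta / gamma.
   Merging the identities' allocations into one allocation of l is feasible for the
   truthful problem (the Minkowski hypothesis), so J(C) + sum_k b_k <= J(B) + c_l(sum_k x_k);
   with u_l = J(C_{-l}) - J(C) this is the first inequality. The same merge under the zero
   bid gives J(C_{-l}, B^0_l) <= J(B), and when this is strict gamma <= 1, so the second
   inequality holds because gamma^{-1} - 1 >= 0. *)

Lemma mem_In j K : mem j K = true <-> In j K.
Proof.
  unfold mem; rewrite existsb_exists; split.
  - intros [i [Hi E]]; apply Nat.eqb_eq in E; subst; auto.
  - intros Hj; exists j; split; auto; apply Nat.eqb_refl.
Qed.

Lemma mem_notIn j K : mem j K = false <-> ~ In j K.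
Proof. rewrite <- mem_In; destruct (mem j K); split; intros; congruence. Qed.

Lemma In_ldiff j S K : In j (ldiff S K) <-> In j S /\ ~ In j K.
Proof. unfold ldiff; rewrite filter_In, Bool.negb_true_iff, mem_notIn; tauto. Qed.

Lemma In_ldiff1 j S k : In j (ldiff S [k]) <-> In j S /\ j <> k.
Proof. rewrite In_ldiff; simpl; intuition. Qed.

Lemma ldiff_app A A' K : ldiff (A ++ A') K = ldiff A K ++ ldiff A' K.
Proof. apply filter_app. Qed.

Lemma ldiff_disjoint A K : (forall j, In j A -> ~ In j K) -> ldiff A K = A.
Proof.
  induction A as [|a A IH]; intros H; auto. unfold ldiff in *; cbn [filter].
  rewrite (proj2 (mem_notIn a K)) by (apply H; left; auto).
  cbn [negb]. rewrite IH; auto. intros j Hj; apply H; right; auto.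
Qed.

Lemma ldiff_incl A K : incl A K -> ldiff A K = [].
Proof.
  induction A as [|a A IH]; intros H; auto. unfold ldiff in *; cbn [filter].
  rewrite (proj2 (mem_In a K)) by (apply H; left; auto).
  apply IH. intros j Hj; apply H; right; auto.
Qed.

Lemma sumR_app A B f : sumR (A ++ B) f = sumR A f + sumR B f.
Proof. induction A; simpl; [lra | rewrite IHA; lra]. Qed.

Lemma sumR_ext A f g : (forall j, In j A -> f j = g j) -> sumR A f = sumR A g.
Proof. induction A; simpl; intros H; auto. rewrite H, IHA by auto; auto. Qed.

Lemma sumR_plus A f g : sumR A (fun j => f j + g j) = sumR A f + sumR A g.
Proof. induction A; simpl; [lra | rewrite IHA; lra]. Qed.

Lemma sumR_eq0 A f : (forall j, In j A -> f j = 0) -> sumR A f = 0.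
Proof. induction A; simpl; intros H; auto. rewrite H, IHA by auto; lra. Qed.

Lemma sumR_nonneg A f : (forall j, In j A -> 0 <= f j) -> 0 <= sumR A f.
Proof.
  induction A; simpl; intros H; [lra |].
  assert (0 <= f a) by auto. assert (0 <= sumR A f) by auto. lra.
Qed.

Lemma sumR_remove L l f : NoDup L -> In l L -> sumR L f = f l + sumR (ldiff L [l]) f.
Proof.
  induction L as [|a L IH]; intros ND Hin; [destruct Hin |].
  inversion ND as [|? ? HaL NDL]; subst.
  unfold ldiff; cbn [filter]. fold (ldiff L [l]). destruct (Nat.eqb_spec a l) as [-> | Hne].
  - rewrite (proj2 (mem_In l [l])) by (left; auto). cbn [negb].
    rewrite ldiff_disjoint; auto. intros j Hj [-> | []]; auto.
  - rewrite (proj2 (mem_notIn a [l])) by (intros [-> | []]; auto). cbn [negb].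
    destruct Hin as [-> | Hin]; [congruence |]. simpl. rewrite IH; auto. lra.
Qed.

Lemma sumR_single L k f : NoDup L -> In k L -> (forall j, In j L -> j <> k -> f j = 0) ->
  sumR L f = f k.
Proof.
  intros ND Hk H. rewrite (sumR_remove L k), (sumR_eq0 (ldiff L [k])); auto; [lra |].
  intros j Hj; apply In_ldiff1 in Hj as [Hj1 Hj2]; auto.
Qed.

Lemma vsum_apply {t} S (x : nat -> vec t) i : vsum S x i = sumR S (fun j => x j i).
Proof. induction S; simpl; [reflexivity | unfold vadd; rewrite IHS; reflexivity]. Qed.

Lemma override_in {t} (S : list nat) (bS C : Profile t) j : In j S -> override S bS C j = bS j.
Proof. intros Hj; unfold override; rewrite (proj2 (mem_In j S) Hj); auto. Qed.

Lemma override_out {t} (S : list nat) (bS C : Profile t) j : ~ In j S -> override S bS C j = C j.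
Proof. intros Hj; unfold override; rewrite (proj2 (mem_notIn j S) Hj); auto. Qed.

Lemma zero_bid_at_self {t} l (C : Profile t) : zero_bid_at l C l = mkBid (bdom (C l)) (fun _ => 0).
Proof. unfold zero_bid_at; rewrite Nat.eqb_refl; auto. Qed.

Lemma zero_bid_at_other {t} l (C : Profile t) j : j <> l -> zero_bid_at l C j = C j.
Proof. intros Hj; unfold zero_bid_at; rewrite (proj2 (Nat.eqb_neq j l) Hj); auto. Qed.

Definition null_bid {t} : Bid t := mkBid (fun x => x = vzero) (fun _ => 0).

Definition pad_zero {t} (T : list nat) (x : nat -> vec t) : nat -> vec t :=
  fun j => if mem j T then vzero else x j.

Definition merge {t} (l : nat) (S : list nat) (x : nat -> vec t) : nat -> vec t :=
  fun j => if Nat.eqb j l then vsum S x else x j.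

Section Minimum.

Context {t p q : nat} (M : Market t p q).

Lemma Obj_sumR (B : Profile t) S x y :
  Obj M B S x y = sumR S (fun j => bval (B j) (x j)) + dbar M (vsum S x) y.
Proof. reflexivity. Qed.

Lemma IsMin_unique B S v w : IsMin M B S v -> IsMin M B S w -> v = w.
Proof.
  intros [[x [y [F E]]] H] [[x' [y' [F' E']]] H'].
  specialize (H _ _ F'). specialize (H' _ _ F). lra.
Qed.

Lemma J_of_IsMin B S v : IsMin M B S v -> J M B S = v.
Proof.
  intros H. apply (IsMin_unique B S); auto.
  exact (epsilon_spec (inhabits 0) (fun v => IsMin M B S v) (ex_intro _ v H)).
Qed.

Lemma IsMin_J B S : Jfin M B S -> IsMin M B S (J M B S).
Proof. intros [v H]. rewrite (J_of_IsMin _ _ _ H); auto. Qed.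

Lemma IsMin_simulation D T E A v :
  (forall x y, Feasible M D T x y ->
     exists x', Feasible M E A x' y /\ Obj M E A x' y <= Obj M D T x y) ->
  (forall x y, Feasible M E A x y ->
     exists x', Feasible M D T x' y /\ Obj M D T x' y <= Obj M E A x y) ->
  IsMin M E A v -> IsMin M D T v.
Proof.
  intros HDE HED [[x [y [F Ev]]] Hlb].
  assert (LB : forall x y, Feasible M D T x y -> v <= Obj M D T x y).
  { intros x0 y0 F0. destruct (HDE _ _ F0) as [x' [F' L']].
    specialize (Hlb _ _ F'). lra. }
  split; auto.
  destruct (HED _ _ F) as [x' [F' L']]. exists x', y; split; auto.
  specialize (LB _ _ F'). lra.
Qed.

Lemma IsMin_ext D E T v : (forall j, In j T -> D j = E j) -> IsMin M E T v -> IsMin M D T v.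
Proof.
  intros Hag.
  assert (Hobj : forall x y, Obj M D T x y = Obj M E T x y).
  { intros x y. rewrite !Obj_sumR, (sumR_ext T _ (fun j => bval (E j) (x j))); auto.
    intros j Hj; rewrite Hag; auto. }
  apply IsMin_simulation; intros x y [F1 F2]; exists x; rewrite Hobj; split; try lra;
    split; auto; intros j Hj; [rewrite <- Hag | rewrite Hag]; auto.
Qed.

Lemma pad_zero_feasible (C D : Profile t) A T x y :
  (forall j, In j A -> ~ In j T) -> (forall j, In j A -> D j = C j) ->
  (forall k, In k T -> bdom (D k) vzero /\ bval (D k) vzero = 0) ->
  Feasible M C A x y ->
  Feasible M D (A ++ T) (pad_zero T x) y /\ Obj M D (A ++ T) (pad_zero T x) y = Obj M C A x y.
Proof.
  intros Hd HDC HT [F1 F2].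
  assert (HA : forall j, In j A -> pad_zero T x j = x j).
  { intros j Hj. unfold pad_zero. rewrite (proj2 (mem_notIn _ _) (Hd j Hj)); auto. }
  assert (HTz : forall j, In j T -> pad_zero T x j = vzero).
  { intros j Hj. unfold pad_zero. rewrite (proj2 (mem_In _ _) Hj); auto. }
  assert (Hv : vsum (A ++ T) (pad_zero T x) = vsum A x).
  { apply functional_extensionality; intro i. rewrite !vsum_apply, sumR_app.
    rewrite (sumR_eq0 T); [| intros j Hj; rewrite HTz; auto].
    rewrite (sumR_ext A _ (fun j => x j i)); [lra |]. intros j Hj; rewrite HA; auto. }
  split; [split |].
  - intros j Hj. apply in_app_or in Hj as [Hj | Hj].
    + rewrite HA, HDC; auto.
    + rewrite HTz by auto. apply HT; auto.
  - rewrite Hv; auto.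
  - rewrite !Obj_sumR, Hv, sumR_app.
    rewrite (sumR_eq0 T); [| intros j Hj; rewrite HTz; auto; apply HT; auto].
    rewrite (sumR_ext A _ (fun j => bval (C j) (x j))); [lra |].
    intros j Hj; rewrite HA, HDC; auto.
Qed.

Lemma IsMin_pad_null (C D : Profile t) A T v :
  (forall j, In j A -> ~ In j T) -> (forall j, In j A -> D j = C j) ->
  (forall k, In k T -> D k = null_bid) ->
  IsMin M C A v -> IsMin M D (A ++ T) v.
Proof.
  intros Hd HDC HTnull. apply IsMin_simulation.
  - intros x y [F1 F2].
    assert (HTz : forall k, In k T -> x k = vzero).
    { intros k Hk. specialize (F1 k (in_or_app _ _ _ (or_intror Hk))).
      rewrite HTnull in F1 by auto. exact F1. }
    assert (Hv : vsum (A ++ T) x = vsum A x).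
    { apply functional_extensionality; intro i. rewrite !vsum_apply, sumR_app.
      rewrite (sumR_eq0 T); [lra |]. intros k Hk; rewrite HTz; auto. }
    exists x; split; [split |].
    + intros j Hj. rewrite <- HDC by auto. apply F1, in_or_app; auto.
    + rewrite <- Hv; auto.
    + rewrite !Obj_sumR, Hv, sumR_app, (sumR_eq0 T); [| intros k Hk; rewrite HTnull; auto].
      rewrite (sumR_ext A (fun j => bval (D j) (x j)) (fun j => bval (C j) (x j))); [lra |].
      intros j Hj; rewrite HDC; auto.
  - intros x y Fx.
    assert (HT : forall k, In k T -> bdom (D k) vzero /\ bval (D k) vzero = 0).
    { intros k Hk; rewrite HTnull by auto; simpl; auto. }
    destruct (pad_zero_feasible C D A T x y Hd HDC HT Fx) as [F' E'].
    exists (pad_zero T x); split; [exact F' | lra].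
Qed.

Lemma vsum_merge L l S (x : nat -> vec t) : NoDup L -> In l L ->
  vsum L (merge l S x) = vsum (ldiff L [l] ++ S) x.
Proof.
  intros ND Hl. apply functional_extensionality; intro i.
  rewrite !vsum_apply, sumR_app, (sumR_remove L l) by auto.
  unfold merge at 1; rewrite Nat.eqb_refl, vsum_apply.
  rewrite (sumR_ext (ldiff L [l]) _ (fun j => x j i)); [lra |].
  intros j Hj; apply In_ldiff1 in Hj as [_ Hj]. unfold merge.
  rewrite (proj2 (Nat.eqb_neq j l) Hj); auto.
Qed.

Lemma Obj_merge E L l S x y : NoDup L -> In l L ->
  Obj M E L (merge l S x) y = sumR (ldiff L [l]) (fun j => bval (E j) (x j))
     + bval (E l) (vsum S x) + dbar M (vsum (ldiff L [l] ++ S) x) y.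
Proof.
  intros ND Hl. rewrite Obj_sumR, vsum_merge, (sumR_remove L l) by auto.
  unfold merge at 1; rewrite Nat.eqb_refl.
  rewrite (sumR_ext (ldiff L [l]) _ (fun j => bval (E j) (x j))); [lra |].
  intros j Hj; apply In_ldiff1 in Hj as [_ Hj]. unfold merge.
  rewrite (proj2 (Nat.eqb_neq j l) Hj); auto.
Qed.

Lemma Feasible_merge E L l S x y : NoDup L -> In l L ->
  (forall j, In j (ldiff L [l]) -> bdom (E j) (x j)) -> bdom (E l) (vsum S x) ->
  (forall i, gbar M (vsum (ldiff L [l] ++ S) x) y i <= 0) ->
  Feasible M E L (merge l S x) y.
Proof.
  intros ND Hl H1 H2 H3. split.
  - intros j Hj. unfold merge. destruct (Nat.eqb_spec j l) as [-> | Hne]; auto.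
    apply H1, In_ldiff1; auto.
  - rewrite vsum_merge; auto.
Qed.

Lemma WeakSupermodConst_le_1 N gamma (P : Profile t) k :
  WeakSupermodConst M N gamma -> NoDup N -> In k N -> ValidProfile P N ->
  Jfin M P N -> Jfin M P (ldiff N [k]) -> J M P N < J M P (ldiff N [k]) -> gamma <= 1.
Proof.
  intros [Hg HW] HN Hk HP HJ HJk Hlt.
  assert (Hk1 : NoDup [k]) by (constructor; [intros [] | constructor]).
  assert (Hinc : incl [k] N) by (intros j [<- | []]; auto).
  assert (H := HW P HP [k] N Hk1 HN Hinc (incl_refl N) HJk HJ).
  simpl in H. assert (Hk' : forall j, In j [k] -> Jfin M P (ldiff N [j])).
  { intros j [<- | []]; auto. }
  specialize (H Hk'). nra.
Qed.

End Minimum.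

Definition handover {t} (l k0 : nat) (S : list nat) (C : Profile t) : Profile t :=
  override S (fun j => if Nat.eqb j k0 then mkBid (bdom (C l)) (fun _ => 0) else null_bid) C.

Definition split_at {t} (l k0 : nat) (S : list nat) (x : nat -> vec t) : nat -> vec t :=
  fun j => if mem j S then (if Nat.eqb j k0 then x l else vzero) else x j.

Section Shill.

Context {t p q : nat} (M : Market t p q) (L S : list nat) (l : nat) (C bS : Profile t).
Hypotheses (HL : NoDup L) (Hl : In l L) (HS : NoDup S) (HSL : forall k, In k S -> ~ In k L).
Hypotheses (HVC : ValidProfile C L) (HVS : ValidProfile bS S).
Hypothesis Hmink : forall x : nat -> vec t,
  (forall k, In k S -> bdom (bS k) (x k)) -> bdom (C l) (vsum S x).

Local Notation A := (ldiff L [l]).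
Local Notation B := (override S bS C).
Local Notation Z := (zero_bid_at l C).

Lemma rest_not_shill j : In j A -> ~ In j S.
Proof. intros Hj HjS. apply In_ldiff in Hj as [Hj _]. exact (HSL j HjS Hj). Qed.

Lemma rest_in_L j : In j A -> In j L /\ j <> l.
Proof. apply In_ldiff1. Qed.

Lemma NoDup_rest_shill : NoDup (A ++ S).
Proof. apply NoDup_app; [apply NoDup_filter, HL | exact HS | exact rest_not_shill]. Qed.

Lemma override_rest j : In j A -> B j = C j.
Proof. intros Hj; apply override_out, rest_not_shill; auto. Qed.

Lemma zero_bid_at_rest j : In j A -> Z j = C j.
Proof. intros Hj; apply zero_bid_at_other, rest_in_L; auto. Qed.

Lemma ValidProfile_shill : ValidProfile B (A ++ S).
Proof.
  intros j Hj. apply in_app_or in Hj as [Hj | Hj].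
  - rewrite override_rest by auto. apply HVC, rest_in_L; auto.
  - rewrite override_in by auto. auto.
Qed.

Lemma Obj_shill x y : Obj M B (A ++ S) x y =
  sumR A (fun j => bval (C j) (x j)) + sumR S (fun k => bval (bS k) (x k))
  + dbar M (vsum (A ++ S) x) y.
Proof.
  rewrite Obj_sumR, sumR_app.
  rewrite (sumR_ext A _ (fun j => bval (C j) (x j))) by (intros j Hj; rewrite override_rest; auto).
  rewrite (sumR_ext S _ (fun k => bval (bS k) (x k))) by (intros k Hk; rewrite override_in; auto).
  lra.
Qed.

Lemma Feasible_merge_shill (E : Profile t) x y :
  (forall j, In j A -> E j = C j) -> bdom (E l) = bdom (C l) ->
  Feasible M B (A ++ S) x y -> Feasible M E L (merge l S x) y.
Proof.
  intros HEC HEl [F1 F2]. apply Feasible_merge; auto.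
  - intros j Hj. rewrite HEC, <- override_rest by auto. apply F1, in_or_app; auto.
  - rewrite HEl. apply Hmink. intros k Hk. rewrite <- (override_in S bS C) by auto.
    apply F1, in_or_app; auto.
Qed.

Lemma J_truthful_le x y : Jfin M C L -> Feasible M B (A ++ S) x y ->
  J M C L + sumR S (fun k => bval (bS k) (x k)) <= Obj M B (A ++ S) x y + bval (C l) (vsum S x).
Proof.
  intros HC Fx.
  assert (HFC : Feasible M C L (merge l S x) y) by (apply Feasible_merge_shill; auto).
  assert (Hle := proj2 (IsMin_J M C L HC) _ _ HFC).
  rewrite Obj_merge, Obj_shill in * by auto. lra.
Qed.

Lemma J_zero_bid_le x y : Jfin M Z L -> Feasible M B (A ++ S) x y -> J M Z L <= Obj M B (A ++ S) x y.
Proof.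
  intros HZ Fx.
  assert (HFZ : Feasible M Z L (merge l S x) y).
  { apply Feasible_merge_shill; auto using zero_bid_at_rest.
    rewrite zero_bid_at_self; auto. }
  assert (Hle := proj2 (IsMin_J M Z L HZ) _ _ HFZ).
  rewrite Obj_merge, zero_bid_at_self in Hle by auto. simpl in Hle.
  rewrite (sumR_ext A _ (fun j => bval (C j) (x j))) in Hle
    by (intros j Hj; rewrite zero_bid_at_rest; auto).
  assert (0 <= sumR S (fun k => bval (bS k) (x k))).
  { apply sumR_nonneg. intros k Hk. apply (HVS k Hk).
    rewrite <- (override_in S bS C) by auto. apply (proj1 Fx), in_or_app; auto. }
  rewrite Obj_shill. lra.
Qed.

Lemma J_shill_le_rest : Jfin M C A -> Jfin M B (A ++ S) -> J M B (A ++ S) <= J M C A.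
Proof.
  intros HCA HB. destruct (proj1 (IsMin_J M C A HCA)) as [xa [ya [Fa Ea]]].
  assert (HS0 : forall k, In k S -> bdom (B k) vzero /\ bval (B k) vzero = 0).
  { intros k Hk. rewrite override_in by auto. destruct (HVS k Hk) as [H0 [H1 _]]; auto. }
  destruct (pad_zero_feasible M C B A S xa ya rest_not_shill override_rest HS0 Fa) as [F' E'].
  rewrite <- Ea, <- E'. apply (IsMin_J M B _ HB); auto.
Qed.

Lemma IsMin_shill_without_S : Jfin M C A -> IsMin M B (ldiff (A ++ S) S) (J M C A).
Proof.
  intros HCA.
  rewrite ldiff_app, (ldiff_disjoint A S), (ldiff_incl S S), app_nil_r
    by (auto using rest_not_shill, incl_refl).
  apply (IsMin_ext M B C); auto using override_rest, IsMin_J.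
Qed.

Lemma shill_marginals_le gamma :
  WeakSupermodConst M (A ++ S) gamma -> Jfin M C A -> Standing M B (A ++ S) ->
  gamma * sumR S (fun k => J M B (ldiff (A ++ S) [k]) - J M B (A ++ S))
    <= J M C A - J M B (A ++ S).
Proof.
  intros [Hg HW] HCA [HB HBk].
  assert (HBS := IsMin_shill_without_S HCA).
  rewrite <- (J_of_IsMin M B _ _ HBS).
  apply HW; auto using ValidProfile_shill, NoDup_rest_shill, incl_refl.
  - intros k Hk; apply in_or_app; auto.
  - exists (J M C A); auto.
  - intros k Hk; apply HBk, in_or_app; auto.
Qed.

Section Handover.

Variable k0 : nat.
Hypothesis Hk0 : In k0 S.

Local Notation P := (handover l k0 S C).

Lemma handover_rest j : In j A -> P j = C j.
Proof. intros Hj; apply override_out, rest_not_shill; auto. Qed.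

Lemma handover_k0 : P k0 = mkBid (bdom (C l)) (fun _ => 0).
Proof. unfold handover; rewrite override_in, Nat.eqb_refl; auto. Qed.

Lemma handover_null j : In j S -> j <> k0 -> P j = null_bid.
Proof.
  intros Hj Hne; unfold handover.
  rewrite override_in, (proj2 (Nat.eqb_neq j k0) Hne); auto.
Qed.

Lemma bval_handover_shill j x : In j S -> bval (P j) x = 0.
Proof.
  intros Hj; destruct (Nat.eq_dec j k0) as [-> | Hne];
    [rewrite handover_k0 | rewrite handover_null]; auto.
Qed.

Lemma ValidProfile_handover : ValidProfile P (A ++ S).
Proof.
  intros j Hj. apply in_app_or in Hj as [Hj | Hj].
  - rewrite handover_rest by auto. apply HVC, rest_in_L; auto.
  - destruct (HVC l Hl) as [H0 [_ Hnn]].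
    destruct (Nat.eq_dec j k0) as [-> | Hne].
    + rewrite handover_k0. split; [exact H0 | split; [reflexivity |]].
      intros z Hz; split; [apply Hnn; exact Hz | simpl; lra].
    + rewrite handover_null by auto. split; [reflexivity | split; [reflexivity |]].
      intros z Hz; simpl in Hz; subst z; split; [intro i; unfold vzero | simpl]; lra.
Qed.

Lemma IsMin_handover_rest v : IsMin M C A v -> IsMin M P (ldiff (A ++ S) [k0]) v.
Proof.
  rewrite ldiff_app, (ldiff_disjoint A [k0])
    by (intros j Hj [Hjk | []]; subst; exact (rest_not_shill _ Hj Hk0)).
  apply IsMin_pad_null; auto using handover_rest.
  - intros j Hj Hj'. apply In_ldiff1 in Hj' as [Hj' _]. exact (rest_not_shill j Hj Hj').
  - intros k Hk; apply In_ldiff1 in Hk as [Hk Hne]; apply handover_null; auto.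
Qed.

Lemma handover_split x y : Feasible M Z L x y ->
  Feasible M P (A ++ S) (split_at l k0 S x) y /\
  Obj M P (A ++ S) (split_at l k0 S x) y = Obj M Z L x y.
Proof.
  intros [F1 F2]. set (x' := split_at l k0 S x).
  assert (HxA : forall j, In j A -> x' j = x j).
  { intros j Hj; unfold x', split_at.
    rewrite (proj2 (mem_notIn j S)) by (apply rest_not_shill; auto); auto. }
  assert (Hxk0 : x' k0 = x l).
  { unfold x', split_at; rewrite (proj2 (mem_In k0 S) Hk0), Nat.eqb_refl; auto. }
  assert (HxS : forall j, In j S -> j <> k0 -> x' j = vzero).
  { intros j Hj Hne; unfold x', split_at.
    rewrite (proj2 (mem_In j S) Hj), (proj2 (Nat.eqb_neq j k0) Hne); auto. }
  assert (Hv : vsum (A ++ S) x' = vsum L x).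
  { apply functional_extensionality; intro i.
    rewrite !vsum_apply, sumR_app, (sumR_remove L l) by auto.
    rewrite (sumR_single S k0) by (auto; intros j Hj Hne; rewrite HxS; auto).
    rewrite (sumR_ext A (fun j => x' j i) (fun j => x j i)) by (intros j Hj; rewrite HxA; auto).
    rewrite Hxk0; lra. }
  split; [split |].
  - intros j Hj. apply in_app_or in Hj as [Hj | Hj].
    + rewrite HxA, handover_rest, <- zero_bid_at_rest by auto. apply F1, rest_in_L; auto.
    + destruct (Nat.eq_dec j k0) as [-> | Hne].
      * rewrite handover_k0, Hxk0. specialize (F1 l Hl).
        rewrite zero_bid_at_self in F1; exact F1.
      * rewrite handover_null, HxS by auto; simpl; auto.
  - rewrite Hv; auto.
  - rewrite !Obj_sumR, Hv, sumR_app, (sumR_remove L l (fun j => bval (Z j) (x j))) by auto.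
    rewrite (sumR_eq0 S (fun j => bval (P j) (x' j))) by (intros; apply bval_handover_shill; auto).
    rewrite zero_bid_at_self; simpl.
    rewrite (sumR_ext A (fun j => bval (P j) (x' j)) (fun j => bval (Z j) (x j))); [lra |].
    intros j Hj. rewrite HxA, handover_rest, zero_bid_at_rest by auto; auto.
Qed.

Lemma handover_merge x y : Feasible M P (A ++ S) x y ->
  Feasible M Z L (merge l S x) y /\ Obj M Z L (merge l S x) y = Obj M P (A ++ S) x y.
Proof.
  intros [F1 F2].
  assert (HvS : vsum S x = x k0).
  { apply functional_extensionality; intro i. rewrite vsum_apply.
    apply (sumR_single S k0 (fun j => x j i)); auto. intros j Hj Hne.
    specialize (F1 j (in_or_app _ _ _ (or_intror Hj))).
    rewrite handover_null in F1 by auto. simpl in F1. rewrite F1; auto. }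
  split.
  - apply Feasible_merge; auto.
    + intros j Hj. rewrite zero_bid_at_rest, <- handover_rest by auto.
      apply F1, in_or_app; auto.
    + rewrite zero_bid_at_self, HvS. specialize (F1 k0 (in_or_app _ _ _ (or_intror Hk0))).
      rewrite handover_k0 in F1. exact F1.
  - rewrite Obj_merge, Obj_sumR, sumR_app, zero_bid_at_self by auto; simpl.
    rewrite (sumR_eq0 S (fun j => bval (P j) (x j))) by (intros; apply bval_handover_shill; auto).
    rewrite (sumR_ext A (fun j => bval (Z j) (x j)) (fun j => bval (P j) (x j))); [lra |].
    intros j Hj. rewrite zero_bid_at_rest, handover_rest by auto; auto.
Qed.

Lemma IsMin_handover v : IsMin M Z L v -> IsMin M P (A ++ S) v.
Proof.
  apply IsMin_simulation; intros x y Fx;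
    [destruct (handover_merge x y Fx) as [F E] | destruct (handover_split x y Fx) as [F E]];
    eexists; split; [exact F | lra | exact F | lra].
Qed.

End Handover.

(* In [handover l k0 S C] the identity k0 bids 0 on all of X_l and the other identities
   can only receive 0, so the objective is J(C_{-l}, B^0_l) with k0 and J(C_{-l}) without
   it; a strictly positive singleton marginal forces gamma <= 1. *)
Lemma gamma_le_1 gamma : WeakSupermodConst M (A ++ S) gamma -> S <> [] ->
  Jfin M Z L -> Jfin M C A -> J M Z L < J M C A -> gamma <= 1.
Proof.
  intros HW HSne HZ HCA Hlt.
  destruct (exists_last HSne) as [S' [k0 HS']].
  assert (Hk0 : In k0 S) by (rewrite HS'; apply in_or_app; right; left; auto).
  assert (HP := IsMin_handover k0 Hk0 _ (IsMin_J M Z L HZ)).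
  assert (HPk := IsMin_handover_rest k0 Hk0 _ (IsMin_J M C A HCA)).
  apply (WeakSupermodConst_le_1 M (A ++ S) gamma (handover l k0 S C) k0);
    auto using NoDup_rest_shill, ValidProfile_handover, in_or_app.
  - exists (J M Z L); auto.
  - exists (J M C A); auto.
  - rewrite (J_of_IsMin M _ _ _ HP), (J_of_IsMin M _ _ _ HPk); auto.
Qed.

End Shill.

Theorem theorem1 (t p q : nat) (M : Market t p q)
  (L : list nat) (l : nat) (C : Profile t)
  (S : list nat) (bS : Profile t) (gamma : R)
  (xB : nat -> vec t) (yB : vec p) (xC : nat -> vec t) (yC : vec p) :
  NoDup L -> In l L -> ValidProfile C L ->
  NoDup S -> S <> [] -> (forall k, In k S -> ~ In k L) ->
  ValidProfile bS S ->
  (* Minkowski sum of the identities' domains lies in X_l *)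
  (forall x : nat -> vec t, (forall k, In k S -> bdom (bS k) (x k)) ->
       bdom (C l) (vsum S x)) ->
  let B := override S bS C in
  let L' := ldiff L [l] ++ S in
  Standing M C L -> Standing M B L' -> Standing M (zero_bid_at l C) L ->
  WeakSupermodConst M L' gamma ->
  IsMinimizer M B L' xB yB -> IsMinimizer M C L xC yC ->
  let U_shill := sumR S (fun k => vcg_pay M B L' xB k) - bval (C l) (vsum S xB) in
  let u_l := vcg_pay M C L xC l - bval (C l) (xC l) in
  U_shill <= u_l + (/ gamma - 1) * (J M C (ldiff L [l]) - J M B L') /\
  u_l + (/ gamma - 1) * (J M C (ldiff L [l]) - J M B L')
    <= u_l + (/ gamma - 1) * (J M C (ldiff L [l]) - J M (zero_bid_at l C) L).
Proof.
  intros HL Hl HVC HS HSne HSL HVS Hmink B L' HstC HstB HstZ HW [FB [HobjB _]] _ U u.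
  assert (HCA : Jfin M C (ldiff L [l])) by (apply HstC; auto).
  assert (Hmarg := shill_marginals_le M L S l C bS HL HS HSL HVC HVS gamma HW HCA HstB).
  assert (Htruth := J_truthful_le M L S l C bS HL Hl HSL Hmink xB yB (proj1 HstC) FB).
  assert (Hzero := J_zero_bid_le M L S l C bS HL Hl HSL HVS Hmink xB yB (proj1 HstZ) FB).
  assert (Hrest := J_shill_le_rest M L S l C bS HSL HVS HCA (proj1 HstB)).
  fold B L' in Hmarg, Htruth, Hzero, Hrest. rewrite HobjB in Htruth, Hzero.
  set (D := sumR S (fun k => J M B (ldiff L' [k]) - J M B L')) in Hmarg.
  assert (HU : U = sumR S (fun k => bval (bS k) (xB k)) + D - bval (C l) (vsum S xB)).
  { unfold U, D.
    rewrite (sumR_ext S _ (fun k => bval (bS k) (xB k) + (J M B (ldiff L' [k]) - J M B L'))),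
      sumR_plus; [ring |].
    intros k Hk. unfold vcg_pay, B; rewrite override_in by auto. ring. }
  assert (Hu : u = J M C (ldiff L [l]) - J M C L) by (unfold u, vcg_pay; ring).
  assert (Hg := proj1 HW).
  assert (HD : D <= / gamma * (J M C (ldiff L [l]) - J M B L')).
  { apply (Rmult_le_reg_l gamma); auto. rewrite <- Rmult_assoc, Rinv_r, Rmult_1_l; lra. }
  split; [rewrite HU, Hu; lra |].
  destruct (Rle_lt_or_eq_dec _ _ Hzero) as [Hlt | ->]; [| lra].
  assert (Hg1 : gamma <= 1)
    by (apply (gamma_le_1 M L S l C HL Hl HS HSL HVC gamma); [apply HW | apply HSne
        | apply HstZ | apply HCA | lra]).
  assert (1 <= / gamma) by (rewrite <- Rinv_1; apply Rinv_le_contravar; lra).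
  apply Rplus_le_compat_l, Rmult_le_compat_l; lra.
Qed.
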